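(* Let $Q\in\mathbb{R}^{n\times n}$ be symmetric positive definite, $\|x\|=\sqrt{x^TQx}$, $\|u\|_*=\sqrt{u^TQ^{-1}u}$. Let $f\colon\mathbb{R}^n\to\mathbb{R}$ be convex and differentiable with $\|\nabla f(x)-\nabla f(y)\|_*\le L\|x-y\|$ for all $x,y$, and assume $f$ has a minimizer $x_\star$, $f_\star=f(x_\star)$. Let $w$ be differentiable and $1$-strongly convex with respect to $\|\cdot\|$, and $V_x(y)=w(y)-\langle\nabla w(x),y-x\rangle-w(x)$. Let $\{\alpha_k\}_{k=1}^\infty$ be positive with $\alpha_1=\frac2L$ and $0\le\alpha_{k+1}^2L-2\alpha_{k+1}\le\alpha_k^2L$ for $k\ge1$, and $\tau_k=\frac2{\alpha_{k+1}L}$ for $k\ge1$. Given $x_0$, let $y_0=z_0=x_0$ and for $k=0,1,\dots$ \[ y_{k+1}=x_k-L^{-1}Q^{-1}\nabla f(x_k),\quad z_{k+1}=\operatorname*{argmin}_{y}\{V_{z_k}(y)+\langle\alpha_{k+1}\nabla f(x_k),y-x_k\rangle\},\quad x_{k+1}=(1-\tau_{k+1})y_{k+1}+\tau_{k+1}z_{k+1}. \] Let $\{\tilde\alpha_k\}_{k=1}^\infty$ be positive with $\tilde\alpha_1=\frac1L$ and $0\le\tilde\alpha_{k+1}^2L-\tilde\alpha_{k+1}\le\frac12\alpha_k^2L$ for $k\ge1$, let $\tilde\tau_k=\frac{1}{\tilde\alpha_{k+1}L}$ and $\tilde x_k=(1-\tilde\tau_k)y_k+\tilde\tau_kz_k$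 for $k\ge0$. Then for $k=0,1,\dots$, \[ f(\tilde x_k)-f_\star\le\frac{V_{x_0}(x_\star)}{L\tilde\alpha_{k+1}^2}. \]
   Context: $\langle\cdot,\cdot\rangle$ is the standard Euclidean inner product. ''$1$-strongly convex with respect to $\|\cdot\|$'' means $w(y)\ge w(x)+\langle\nabla w(x),y-x\rangle+\frac12\|y-x\|^2$ for all $x,y$. *)

From HB Require Import structures.
From mathcomp Require Import all_boot all_order all_algebra.
From mathcomp Require Import all_classical all_reals all_analysis.
Import Order.TTheory GRing.Theory Num.Theory.
Import numFieldNormedType.Exports.
Set Implicit Arguments. Unset Strict Implicit. Unset Printing Implicit Defensive.
Local Open Scope ring_scope.

Definition ip {R : realType} {n : nat} (u v : 'cV[R]_n) : R :=
  \sum_(i < n) u i 0 * v i 0.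

Definition sym_posdef {R : realType} {n : nat} (Q : 'M[R]_n) : Prop :=
  Q^T = Q /\ forall v : 'cV[R]_n, v != 0 -> 0 < ip v (Q *m v).

Definition qnorm {R : realType} {n : nat} (Q : 'M[R]_n) (x : 'cV[R]_n) : R :=
  Num.sqrt (ip x (Q *m x)).

Definition dnorm {R : realType} {n : nat} (Q : 'M[R]_n) (u : 'cV[R]_n) : R :=
  Num.sqrt (ip u (invmx Q *m u)).

Definition is_gradient {R : realType} {n : nat}
  (f : 'cV[R]_n -> R) (g : 'cV[R]_n -> 'cV[R]_n) : Prop :=
  forall x, differentiable f x /\ forall h, 'd f x h = ip (g x) h.

Definition convex_fn {R : realType} {n : nat} (f : 'cV[R]_n -> R) : Prop :=
  forall (x y : 'cV[R]_n) (t : R), 0 <= t -> t <= 1 ->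
    f ((1 - t) *: x + t *: y) <= (1 - t) * f x + t * f y.

Definition strongly_convex1 {R : realType} {n : nat} (Q : 'M[R]_n)
  (w : 'cV[R]_n -> R) (gw : 'cV[R]_n -> 'cV[R]_n) : Prop :=
  forall x y, w x + ip (gw x) (y - x) + 2^-1 * qnorm Q (y - x) ^+ 2 <= w y.

Definition bregman {R : realType} {n : nat}
  (w : 'cV[R]_n -> R) (gw : 'cV[R]_n -> 'cV[R]_n) (x y : 'cV[R]_n) : R :=
  w y - ip (gw x) (y - x) - w x.

From HB Require Import structures.
From mathcomp Require Import all_boot all_order all_algebra.
From mathcomp Require Import all_classical all_reals all_analysis.
From mathcomp Require Import ring lra.
Import Order.TTheory GRing.Theory Num.Theory.
Import numFieldNormedType.Exports.
Local Open Scope ring_scope.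

(* The argument is a Lyapunov argument for the linear coupling of gradient and
   mirror descent.  Let [H x = f x - f⋆ - |∇f x|_*^2 / (2L)]; it is nonnegative
   because a gradient step from [x] decreases [f] by [|∇f x|_*^2 / (2L)].  The
   potential [α_{k+1}^2 L/2 · H x_k + V_{z_{k+1}}(x⋆)] is nonincreasing:
   - the mirror step gives [α <∇f x_k, z_k - x⋆> <= V_{z_k}(x⋆) - V_{z_{k+1}}(x⋆)
     + α^2 |∇f x_k|_*^2 / 2];
   - the coupling [x_k = (1-τ) y_k + τ z_k] turns [<∇f x_k, z_k - x_k>] into a
     multiple of [<∇f x_k, x_k - y_k>];
   - cocoercivity, [f x + <∇f x, u - x> + |∇f u - ∇f x|_*^2 / (2L) <= f u], bounds
     [<∇f x_k, x_k - x⋆>] and, [y_k] being a gradient step from [x_{k-1}], also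
     [<∇f x_k, y_k - x_k>] by [H x_{k-1}];
   and the step-size conditions make the weights telescope.  The same estimate at
   the extrapolated point [x̃_k], with [τ̃ = 1/(α̃ L)] and [V >= 0] in place of
   the mirror step, gives the bound.  Cocoercivity rests on the descent lemma,
   obtained from the monotonicity of [t ↦ f (x + t d) - t <∇f x, d> - t^2 L |d|^2 / 2]. *)


Section InnerProduct.
Context {R : realType} {n : nat}.
Implicit Types (u v w : 'cV[R]_n) (a : R).

Lemma ip_trmx u v : ip u v = (u^T *m v) 0 0.
Proof. by rewrite mxE; apply: eq_bigr => i _; rewrite mxE. Qed.

Lemma ipC u v : ip u v = ip v u.
Proof. by apply: eq_bigr => i _; rewrite mulrC. Qed.

Lemma ipDr u v w : ip u (v + w) = ip u v + ip u w.
Proof. by rewrite /ip -big_split; apply: eq_bigr => i _; rewrite mxE mulrDr. Qed.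

Lemma ipZr a u v : ip u (a *: v) = a * ip u v.
Proof. by rewrite /ip mulr_sumr; apply: eq_bigr => i _; rewrite mxE mulrCA. Qed.

Lemma ipNr u v : ip u (- v) = - ip u v.
Proof. by rewrite -scaleN1r ipZr mulN1r. Qed.

Lemma ipBr u v w : ip u (v - w) = ip u v - ip u w.
Proof. by rewrite ipDr ipNr. Qed.

Lemma ipDl u v w : ip (u + v) w = ip u w + ip v w.
Proof. by rewrite ipC ipDr !(ipC w). Qed.

Lemma ipZl a u v : ip (a *: u) v = a * ip u v.
Proof. by rewrite ipC ipZr ipC. Qed.

Lemma ipNl u v : ip (- u) v = - ip u v.
Proof. by rewrite ipC ipNr ipC. Qed.

Lemma ipBl u v w : ip (u - v) w = ip u w - ip v w.
Proof. by rewrite ipDl ipNl. Qed.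

Lemma ip0l v : ip 0 v = 0.
Proof. by rewrite -(scale0r 0) ipZl mul0r. Qed.

Lemma ip_mulmx (A : 'M[R]_n) u v : ip u (A *m v) = ip (A^T *m u) v.
Proof. by rewrite !ip_trmx trmx_mul trmxK mulmxA. Qed.

Lemma ip_ge0 u : 0 <= ip u u.
Proof. by rewrite sumr_ge0 // => i _; rewrite -expr2 sqr_ge0. Qed.

Lemma ip_le0_eq0 u : ip u u <= 0 -> u = 0.
Proof.
move=> u_le0; have /eqP : ip u u = 0 by apply/eqP; rewrite eq_le u_le0 ip_ge0.
rewrite psumr_eq0 => [/allP u0|i _]; last by rewrite -expr2 sqr_ge0.
apply/matrixP => i j; rewrite mxE (ord1 j).
by have /implyP/(_ isT) := u0 i (mem_index_enum i); rewrite -expr2 sqrf_eq0 => /eqP.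
Qed.

Lemma quad_formB (A : 'M[R]_n) u v : A^T = A ->
  ip (u - v) (A *m (u - v)) = ip u (A *m u) - 2 * ip v (A *m u) + ip v (A *m v).
Proof.
move=> A_sym; rewrite mulmxBr !ipBl !ipBr.
have -> : ip u (A *m v) = ip v (A *m u) by rewrite ip_mulmx A_sym ipC.
ring.
Qed.

End InnerProduct.

Section QuadraticNorms.
Context {R : realType} {n : nat} {Q : 'M[R]_n}.
Implicit Types (u v : 'cV[R]_n) (a : R).

Lemma qnormN v : qnorm Q (- v) = qnorm Q v.
Proof. by rewrite /qnorm mulmxN ipNl ipNr opprK. Qed.

Lemma dnormN u : dnorm Q (- u) = dnorm Q u.
Proof. by rewrite /dnorm mulmxN ipNl ipNr opprK. Qed.

Hypothesis Q_spd : sym_posdef Q.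

Lemma qnorm_sqr v : qnorm Q v ^+ 2 = ip v (Q *m v).
Proof.
rewrite sqr_sqrtr //; have [->|/Q_spd.2/ltW //] := eqVneq v 0.
by rewrite ip0l.
Qed.

Lemma posdef_unitmx : Q \in unitmx.
Proof.
rewrite -row_free_unit; apply: inj_row_free => r rQ0; apply/trmx_inj/eqP.
apply: contraT; rewrite trmx0 => /Q_spd.2.
by rewrite -[Q in Q *m _]Q_spd.1 -trmx_mul rQ0 trmx0 ipC ip0l ltxx.
Qed.

Lemma dnorm_qnorm u : dnorm Q u = qnorm Q (invmx Q *m u).
Proof. by rewrite /qnorm mulKVmx ?posdef_unitmx // ipC. Qed.

Lemma dnorm_sqr u : dnorm Q u ^+ 2 = ip u (invmx Q *m u).
Proof. by rewrite dnorm_qnorm qnorm_sqr mulKVmx ?posdef_unitmx // ipC. Qed.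

Lemma sqr_qnormZ a v : qnorm Q (a *: v) ^+ 2 = a ^+ 2 * qnorm Q v ^+ 2.
Proof. by rewrite !qnorm_sqr -scalemxAr ipZl ipZr mulrA -expr2. Qed.

Lemma sqr_dnormB u v :
  dnorm Q (u - v) ^+ 2 = dnorm Q u ^+ 2 - 2 * ip v (invmx Q *m u) + dnorm Q v ^+ 2.
Proof. by rewrite !dnorm_sqr quad_formB // trmx_inv Q_spd.1. Qed.

Lemma ip_le_young a u v : 0 < a ->
  ip u v <= a / 2 * dnorm Q u ^+ 2 + (2 * a)^-1 * qnorm Q v ^+ 2.
Proof.
move=> a_gt0; have nonneg := sqr_ge0 (qnorm Q (a *: (invmx Q *m u) - v)).
rewrite qnorm_sqr (quad_formB _ _ _ Q_spd.1) -!qnorm_sqr in nonneg.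
rewrite sqr_qnormZ -dnorm_qnorm -scalemxAr mulKVmx ?posdef_unitmx // in nonneg.
rewrite ipZr ipC in nonneg; rewrite -subr_ge0.
have -> : a / 2 * dnorm Q u ^+ 2 + (2 * a)^-1 * qnorm Q v ^+ 2 - ip u v =
  (2 * a)^-1 * (a ^+ 2 * dnorm Q u ^+ 2 - 2 * (a * ip u v) + qnorm Q v ^+ 2).
  by field; rewrite gt_eqF.
by rewrite mulr_ge0 // invr_ge0 mulr_ge0 // ltW.
Qed.

End QuadraticNorms.

Section GradientCalculus.
Context {R : realType} {n : nat} {f : 'cV[R]_n -> R} {g : 'cV[R]_n -> 'cV[R]_n}.
Hypothesis f_grad : is_gradient f g.
Implicit Types (x u v d : 'cV[R]_n) (c t : R).
Local Open Scope classical_set_scope.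
Local Open Scope ring_scope.

Lemma gradient_quotient_cvg x v :
  (fun h : R => h^-1 *: ((f \o shift x) (h *: v) - f x)) @ 0^'+ --> ip (g x) v.
Proof.
have [fx_diff fx_grad] := f_grad x.
have <- : derive f x v = ip (g x) v by rewrite deriveE // fx_grad.
apply: cvg_trans (diff_derivable fx_diff : derivable f x v) => A /=.
move=> /nbhs_ballP[_ /posnumP[e] eA]; exists e%:num => //= h eh.
by move=> /gt_eqF/negbT/eA; exact.
Qed.

Lemma ip_gradient_ge x v c :
  (forall t, 0 < t -> t <= 1 -> t * c <= f (x + t *: v) - f x) -> c <= ip (g x) v.
Proof.
move=> incr_ge; apply: (cvgr_to_ge (gradient_quotient_cvg x v)); near=> h.
have h_gt0 : 0 < h by near: h; exact: nbhs_right_gt.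
rewrite /= (addrC (h *: v)) -(ler_pM2l h_gt0) mulrA mulfV ?gt_eqF // mul1r.
by apply: incr_ge => //; near: h; exact: nbhs_right_le.
Unshelve. all: by end_near.
Qed.

Lemma ip_gradient_le x v c :
  (forall t, 0 < t -> t <= 1 -> f (x + t *: v) - f x <= t * c) -> ip (g x) v <= c.
Proof.
move=> incr_le; apply: (cvgr_to_le (gradient_quotient_cvg x v)); near=> h.
have h_gt0 : 0 < h by near: h; exact: nbhs_right_gt.
rewrite /= (addrC (h *: v)) -(ler_pM2l h_gt0) mulrA mulfV ?gt_eqF // mul1r.
by apply: incr_le => //; near: h; exact: nbhs_right_le.
Unshelve. all: by end_near.
Qed.

Lemma gradient_eq0_of_min xs : (forall u, f xs <= f u) -> g xs = 0.
Proof.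
move=> xs_min; apply: ip_le0_eq0; rewrite -oppr_ge0 -ipNr.
by apply: ip_gradient_ge => t _ _; rewrite mulr0 subr_ge0.
Qed.

Lemma convex_tangent_le x u : convex_fn f -> f x + ip (g x) (u - x) <= f u.
Proof.
move=> f_convex; rewrite -lerBrDl; apply: ip_gradient_le => t t_gt0 t_le1.
have -> : x + t *: (u - x) = (1 - t) *: x + t *: u.
  by rewrite scalerBr scalerBl scale1r addrCA addrC -addrA [- _ + _]addrC.
have := f_convex x u t (ltW t_gt0) t_le1; lra.
Qed.

Lemma is_derive_along x d t :
  is_derive t (1 : R) (fun s => f (x + s *: d)) (ip (g (x + t *: d)) d).
Proof.
have [fx_diff fx_grad] := f_grad (x + t *: d).
have -> : (fun s => f (x + s *: d)) = f \o (cst x + *:%R ^~ d) by [].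
have line_diff : is_diff t (cst x + *:%R ^~ d) (0 + *:%R ^~ d).
  exact: (is_diffD (is_diff_cst x t) (is_diff_scalel t d)).
have line_diff' := @ex_diff _ _ _ _ _ _ _ line_diff.
apply: DeriveDef; first exact/diff_derivable/differentiable_comp.
rewrite deriveE; last exact: differentiable_comp.
by rewrite diff_comp //= diff_val /= -fx_grad add0r scale1r.
Qed.

Lemma descent_along x d c :
  (forall s, 0 < s -> ip (g (x + s *: d) - g x) d <= s * c) ->
  f (x + d) <= f x + ip (g x) d + c / 2.
Proof.
move=> incr_le.
have scalerE (k r : R) : k *: r = k * r := erefl.
pose phi : R -> R :=
  (fun s => f (x + s *: d)) - ( *%R ^~ (ip (g x) d)) - (fun s => s ^+ 2 * (c / 2)).
have phi' (s : R) : is_derive s (1 : R) phi (ip (g (x + s *: d) - g x) d - s * c).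
  apply: is_derive_eq.
    exact: (is_deriveB (is_deriveB (is_derive_along x d s)
      (is_deriveM (is_derive_id s 1) (is_derive_cst (ip (g x) d) s 1)))
      (is_deriveM (is_deriveX 2 (is_derive_id s 1)) (is_derive_cst (c / 2) s 1))).
  by rewrite !scaler0 !add0r /= !scalerE ipBl; field.
have phi_derivable s : derivable phi s 1 := @ex_derive _ _ _ _ _ _ _ (phi' s).
have phi_nincr : {in `[0, 1] &, {homo phi : s t /~ s <= t}}.
  apply: ler0_derive1_le_cc => [s _|s /[!in_itv] /andP[s_gt0 _]|].
  - exact: phi_derivable.
  - by rewrite derive1E derive_val subr_le0 incr_le.
  - by apply: derivable_within_continuous => s _; exact: phi_derivable.
have := phi_nincr 1 0; rewrite !in_itv /= !lexx ler01 => /(_ isT isT isT).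
rewrite /phi !fctE /= !scale0r !addr0 scale1r !mul0r !mul1r expr0n expr1n /=; lra.
Qed.

End GradientCalculus.

Section SmoothConvex.
Context {R : realType} {n : nat} {Q : 'M[R]_n} {L : R}.
Context {f : 'cV[R]_n -> R} {g : 'cV[R]_n -> 'cV[R]_n}.
Hypotheses (Q_spd : sym_posdef Q) (L_gt0 : 0 < L).
Hypotheses (f_convex : convex_fn f) (f_grad : is_gradient f g).
Hypothesis g_lip : forall u v, dnorm Q (g u - g v) <= L * qnorm Q (u - v).
Implicit Types (x y u d : 'cV[R]_n) (s : R).

Lemma sqr_dnorm_gradientB_le u v :
  dnorm Q (g u - g v) ^+ 2 <= L ^+ 2 * qnorm Q (u - v) ^+ 2.
Proof.
have dnorm_ge0 : 0 <= dnorm Q (g u - g v) := sqrtr_ge0 _.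
by rewrite -exprMn !expr2 ler_pM ?g_lip.
Qed.

Lemma ip_gradient_incr_le x d s :
  0 < s -> ip (g (x + s *: d) - g x) d <= s * (L * qnorm Q d ^+ 2).
Proof.
move=> s_gt0; have Ls_inv_gt0 : 0 < (L * s)^-1 by rewrite invr_gt0 mulr_gt0.
have := ip_le_young Q_spd _ (g (x + s *: d) - g x) d Ls_inv_gt0.
have := sqr_dnorm_gradientB_le (x + s *: d) x.
rewrite [x + _ - x]addrC addKr (sqr_qnormZ Q_spd) => lip.
have := ler_wpM2l (divr_ge0 (ltW Ls_inv_gt0) (ler0n _ 2)) lip.
have -> : (L * s)^-1 / 2 * (L ^+ 2 * (s ^+ 2 * qnorm Q d ^+ 2)) = L * s / 2 * qnorm Q d ^+ 2.
  by field; rewrite !gt_eqF.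
rewrite invf_div; lra.
Qed.

Lemma descent x y : f y <= f x + ip (g x) (y - x) + L / 2 * qnorm Q (y - x) ^+ 2.
Proof.
have := descent_along f_grad _ _ _ (ip_gradient_incr_le x (y - x)).
by rewrite [x + _]addrC subrK mulrAC.
Qed.

Lemma gradient_step_le x :
  f (x - L^-1 *: (invmx Q *m g x)) <= f x - (2 * L)^-1 * dnorm Q (g x) ^+ 2.
Proof.
have := descent x (x - L^-1 *: (invmx Q *m g x)).
rewrite [x - _ - x]addrC addKr qnormN (sqr_qnormZ Q_spd) -(dnorm_qnorm Q_spd).
rewrite ipNr ipZr -(dnorm_sqr Q_spd).
have -> : L / 2 * (L^-1 ^+ 2 * dnorm Q (g x) ^+ 2) = (2 * L)^-1 * dnorm Q (g x) ^+ 2.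
  by field; rewrite gt_eqF.
rewrite invfM; lra.
Qed.

Lemma cocoercive x u :
  f x + ip (g x) (u - x) + (2 * L)^-1 * dnorm Q (g u - g x) ^+ 2 <= f u.
Proof.
set e := g u - g x; set step := L^-1 *: (invmx Q *m e).
have upper := descent u (u - step).
have lower := convex_tangent_le f_grad x (u - step) f_convex.
rewrite [u - _ - u]addrC addKr qnormN (sqr_qnormZ Q_spd) -(dnorm_qnorm Q_spd) in upper.
rewrite ipNr ipZr in upper.
rewrite addrAC ipBr ipZr in lower.
have ip_e : ip (g u) (invmx Q *m e) = ip (g x) (invmx Q *m e) + dnorm Q e ^+ 2.
  by rewrite (dnorm_sqr Q_spd) -ipDl [g x + _]addrC subrK.
have half : L / 2 * (L^-1 ^+ 2 * dnorm Q e ^+ 2) = (2 * L)^-1 * dnorm Q e ^+ 2.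
  by field; rewrite gt_eqF.
rewrite ip_e half invfM in upper; rewrite invfM; lra.
Qed.

Lemma cocoercive_gradient_step xp x :
  ip (g x) (xp - L^-1 *: (invmx Q *m g xp) - x) + f x + (2 * L)^-1 * dnorm Q (g x) ^+ 2
    <= f xp - (2 * L)^-1 * dnorm Q (g xp) ^+ 2.
Proof.
have := cocoercive x xp; rewrite (sqr_dnormB Q_spd) invfM => coco.
by rewrite (addrAC xp) ipBr ipZr; lra.
Qed.

Context {xs : 'cV[R]_n}.
Hypothesis xs_min : forall u, f xs <= f u.

Lemma sqr_dnorm_gradient_le x : (2 * L)^-1 * dnorm Q (g x) ^+ 2 <= f x - f xs.
Proof. by have := gradient_step_le x; have := xs_min (x - L^-1 *: (invmx Q *m g x)); lra. Qed.

Lemma cocoercive_min x :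
  f x + ip (g x) (xs - x) + (2 * L)^-1 * dnorm Q (g x) ^+ 2 <= f xs.
Proof.
by have := cocoercive x xs; rewrite (gradient_eq0_of_min f_grad xs xs_min) sub0r dnormN.
Qed.

(* [V'] is the Bregman divergence after a mirror step, or [0] at the extrapolated point. *)
Lemma linear_coupling (a t B V V' : R) x y z :
  0 < a -> 0 < t -> x = (1 - t) *: y + t *: z ->
  V' <= V + a * ip (g x) (xs - z) + a ^+ 2 / 2 * dnorm Q (g x) ^+ 2 ->
  (a / t - a) * (ip (g x) (y - x) + (f x - f xs) + (2 * L)^-1 * dnorm Q (g x) ^+ 2)
    <= (a / t - a) * B ->
  V' + a / t * (f x - f xs + (2 * L)^-1 * dnorm Q (g x) ^+ 2)
    <= V + (a / t - a) * B + a ^+ 2 / 2 * dnorm Q (g x) ^+ 2.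
Proof.
move=> a_gt0 t_gt0 x_mix mirror prev.
have ip_x : ip (g x) x = (1 - t) * ip (g x) y + t * ip (g x) z.
  by rewrite {2}x_mix ipDr !ipZr.
have ip_mix : a * ip (g x) z = a / t * ip (g x) x - (a / t - a) * ip (g x) y.
  by rewrite ip_x; field; rewrite gt_eqF.
have := ler_wpM2l (ltW a_gt0) (cocoercive_min x); rewrite ipBr.
by rewrite ipBr mulrBr ip_mix in mirror; rewrite ipBr in prev; lra.
Qed.

End SmoothConvex.

Section MirrorStep.
Context {R : realType} {n : nat} {Q : 'M[R]_n}.
Context {w : 'cV[R]_n -> R} {gw : 'cV[R]_n -> 'cV[R]_n}.
Hypotheses (Q_spd : sym_posdef Q) (w_grad : is_gradient w gw).
Hypothesis w_sconvex : strongly_convex1 Q w gw.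
Implicit Types (x y z p u v : 'cV[R]_n) (a : R).

Lemma bregman_ge x y : 2^-1 * qnorm Q (y - x) ^+ 2 <= bregman w gw x y.
Proof. by have := w_sconvex x y; rewrite /bregman; lra. Qed.

Lemma bregman_three_point z p u :
  bregman w gw z u = bregman w gw p u + bregman w gw z p + ip (gw p - gw z) (u - p).
Proof. by rewrite /bregman !ipBr !ipBl; ring. Qed.

Lemma ip_le_bregman a v x y :
  0 < a -> a * ip v (x - y) <= bregman w gw x y + a ^+ 2 / 2 * dnorm Q v ^+ 2.
Proof.
move=> a_gt0; have := ler_wpM2l (ltW a_gt0) (ip_le_young Q_spd _ v (x - y) a_gt0).
have -> : a * (a / 2 * dnorm Q v ^+ 2 + (2 * a)^-1 * qnorm Q (x - y) ^+ 2)
    = a ^+ 2 / 2 * dnorm Q v ^+ 2 + 2^-1 * qnorm Q (y - x) ^+ 2.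
  by rewrite -opprB qnormN; field; rewrite gt_eqF.
by have := bregman_ge x y; lra.
Qed.

Section Minimizer.
Context {a : R} {v x0 z p : 'cV[R]_n}.
Hypothesis p_min : forall u,
  bregman w gw z p + ip (a *: v) (p - x0) <= bregman w gw z u + ip (a *: v) (u - x0).

Lemma mirror_step_optimality u :
  ip (gw z) (u - p) - a * ip v (u - p) <= ip (gw p) (u - p).
Proof.
apply: (ip_gradient_ge w_grad) => t _ _; have := p_min (p + t *: (u - p)).
by rewrite /bregman !ipZl !ipBr !ipDr !ipZr !ipBr; lra.
Qed.

Lemma mirror_step_bound u : 0 < a ->
  bregman w gw p u <= bregman w gw z u + a * ip v (u - z) + a ^+ 2 / 2 * dnorm Q v ^+ 2.
Proof.
move=> a_gt0; have := bregman_three_point z p u.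
have := mirror_step_optimality u; have := ip_le_bregman a v z p a_gt0.
rewrite ipBl !ipBr !mulrBr; lra.
Qed.

End Minimizer.
End MirrorStep.

Section AcceleratedScheme.
Context {R : realType} {n : nat} {Q : 'M[R]_n} {L : R}.
Context {f : 'cV[R]_n -> R} {gf : 'cV[R]_n -> 'cV[R]_n}.
Context {w : 'cV[R]_n -> R} {gw : 'cV[R]_n -> 'cV[R]_n}.
Context {xs : 'cV[R]_n} {alpha alphat : nat -> R} {x y z : nat -> 'cV[R]_n}.
Hypotheses (Q_spd : sym_posdef Q) (L_gt0 : 0 < L).
Hypotheses (f_grad : is_gradient f gf) (f_convex : convex_fn f).
Hypothesis gf_lip : forall u v, dnorm Q (gf u - gf v) <= L * qnorm Q (u - v).
Hypothesis xs_min : forall u, f xs <= f u.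
Hypotheses (w_grad : is_gradient w gw) (w_sconvex : strongly_convex1 Q w gw).
Hypothesis alpha_gt0 : forall k, (1 <= k)%N -> 0 < alpha k.
Hypothesis alpha1 : alpha 1%N = 2 / L.
Hypothesis alpha_step : forall k, (1 <= k)%N ->
  0 <= alpha k.+1 ^+ 2 * L - 2 * alpha k.+1 /\
  alpha k.+1 ^+ 2 * L - 2 * alpha k.+1 <= alpha k ^+ 2 * L.
Hypothesis z0 : z 0%N = x 0%N.
Hypothesis y_step : forall k, y k.+1 = x k - L^-1 *: (invmx Q *m gf (x k)).
Hypothesis z_step : forall k u,
  bregman w gw (z k) (z k.+1) + ip (alpha k.+1 *: gf (x k)) (z k.+1 - x k)
    <= bregman w gw (z k) u + ip (alpha k.+1 *: gf (x k)) (u - x k).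
Hypothesis x_step : forall k,
  x k.+1 = (1 - 2 / (alpha k.+2 * L)) *: y k.+1 + (2 / (alpha k.+2 * L)) *: z k.+1.
Hypothesis alphat_gt0 : forall k, (1 <= k)%N -> 0 < alphat k.
Hypothesis alphat1 : alphat 1%N = 1 / L.
Hypothesis alphat_step : forall k, (1 <= k)%N ->
  0 <= alphat k.+1 ^+ 2 * L - alphat k.+1 /\
  alphat k.+1 ^+ 2 * L - alphat k.+1 <= 2^-1 * (alpha k ^+ 2 * L).

Let gap k := f (x k) - f xs - (2 * L)^-1 * dnorm Q (gf (x k)) ^+ 2.
Let xt k := (1 - 1 / (alphat k.+1 * L)) *: y k + (1 / (alphat k.+1 * L)) *: z k.

Lemma gap_ge0 k : 0 <= gap k.
Proof.
have := sqr_dnorm_gradient_le Q_spd L_gt0 f_grad gf_lip xs_min (x k).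
by rewrite /gap; lra.
Qed.

Lemma gap_bound k u :
  ip (gf u) (y k.+1 - u) + (f u - f xs) + (2 * L)^-1 * dnorm Q (gf u) ^+ 2 <= gap k.
Proof.
have := cocoercive_gradient_step Q_spd L_gt0 f_convex f_grad gf_lip (x k) u.
by rewrite -y_step /gap; lra.
Qed.

Lemma potential_step k B : let a := alpha k.+1 in
  x k = (1 - 2 / (a * L)) *: y k + (2 / (a * L)) *: z k ->
  (a ^+ 2 * L / 2 - a) * (ip (gf (x k)) (y k - x k) + (f (x k) - f xs)
     + (2 * L)^-1 * dnorm Q (gf (x k)) ^+ 2) <= (a ^+ 2 * L / 2 - a) * B ->
  bregman w gw (z k.+1) xs + a ^+ 2 * L / 2 * gap k
    <= bregman w gw (z k) xs + (a ^+ 2 * L / 2 - a) * B.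
Proof.
move=> a x_mix prev; have a_gt0 : 0 < a := alpha_gt0 k.+1 isT.
have weight : a / (2 / (a * L)) = a ^+ 2 * L / 2 by field; rewrite !gt_eqF.
have t_gt0 : 0 < 2 / (a * L) by rewrite divr_gt0 ?mulr_gt0.
have := linear_coupling Q_spd L_gt0 f_convex f_grad gf_lip xs_min _ _ B _ _ _ _ _
  a_gt0 t_gt0 x_mix (mirror_step_bound Q_spd w_grad w_sconvex (z_step k) xs a_gt0).
rewrite weight => /(_ prev).
have -> : a ^+ 2 * L / 2 * gap k = a ^+ 2 * L / 2 * (f (x k) - f xs
    + (2 * L)^-1 * dnorm Q (gf (x k)) ^+ 2) - a ^+ 2 / 2 * dnorm Q (gf (x k)) ^+ 2.
  by rewrite /gap; field; rewrite gt_eqF.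
lra.
Qed.

Lemma extrapolation_step k B : let a := alphat k.+1 in
  (a ^+ 2 * L - a) * (ip (gf (xt k)) (y k - xt k) + (f (xt k) - f xs)
     + (2 * L)^-1 * dnorm Q (gf (xt k)) ^+ 2) <= (a ^+ 2 * L - a) * B ->
  a ^+ 2 * L * (f (xt k) - f xs) <= bregman w gw (z k) xs + (a ^+ 2 * L - a) * B.
Proof.
move=> a prev; have a_gt0 : 0 < a := alphat_gt0 k.+1 isT.
have weight : a / (1 / (a * L)) = a ^+ 2 * L by field; rewrite !gt_eqF.
have mirror : 0 <= bregman w gw (z k) xs + a * ip (gf (xt k)) (xs - z k)
    + a ^+ 2 / 2 * dnorm Q (gf (xt k)) ^+ 2.
  have := ip_le_bregman Q_spd w_sconvex a (gf (xt k)) (z k) xs a_gt0.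
  by rewrite -[xs - z k]opprB ipNr; lra.
have t_gt0 : 0 < 1 / (a * L) by rewrite divr_gt0 ?mulr_gt0.
have := linear_coupling Q_spd L_gt0 f_convex f_grad gf_lip xs_min a _ B _ 0
  (xt k) (y k) (z k) a_gt0 t_gt0 erefl mirror.
rewrite weight => /(_ prev).
have -> : a ^+ 2 * L * (f (xt k) - f xs) = a ^+ 2 * L * (f (xt k) - f xs
    + (2 * L)^-1 * dnorm Q (gf (xt k)) ^+ 2) - a ^+ 2 / 2 * dnorm Q (gf (xt k)) ^+ 2.
  by field; rewrite gt_eqF.
lra.
Qed.

Lemma potential_le k :
  alpha k.+1 ^+ 2 * L / 2 * gap k + bregman w gw (z k.+1) xs <= bregman w gw (x 0%N) xs.
Proof.
elim: k => [|k IH].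
  have no_prev : alpha 1%N ^+ 2 * L / 2 - alpha 1%N = 0.
    by rewrite alpha1; field; rewrite gt_eqF.
  have x_mix : x 0%N = (1 - 2 / (alpha 1%N * L)) *: y 0%N + (2 / (alpha 1%N * L)) *: z 0%N.
    have -> : 2 / (alpha 1%N * L) = 1 by rewrite alpha1; field; rewrite gt_eqF.
    by rewrite subrr scale0r add0r scale1r z0.
  have := potential_step 0 0 x_mix; rewrite no_prev !mul0r -z0 => /(_ (lexx 0)).
  lra.
have [c_ge0 c_le] := alpha_step k.+1 isT.
have prev_le : alpha k.+2 ^+ 2 * L / 2 - alpha k.+2 <= alpha k.+1 ^+ 2 * L / 2 by lra.
have prev_ge0 : 0 <= alpha k.+2 ^+ 2 * L / 2 - alpha k.+2 by lra.
have := potential_step k.+1 (gap k) (x_step k) (ler_wpM2l prev_ge0 (gap_bound k _)).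
have := ler_wpM2r (gap_ge0 k) prev_le; lra.
Qed.

Lemma extrapolation_gap_le k :
  alphat k.+1 ^+ 2 * L * (f (xt k) - f xs) <= bregman w gw (x 0%N) xs.
Proof.
case: k => [|k].
  have no_prev : alphat 1%N ^+ 2 * L - alphat 1%N = 0.
    by rewrite alphat1; field; rewrite gt_eqF.
  have /= := extrapolation_step 0 0; rewrite no_prev !mul0r -z0 => /(_ (lexx 0)).
  by rewrite addr0.
have [prev_ge0 prev_le] := alphat_step k.+1 isT.
have := extrapolation_step k.+1 (gap k) (ler_wpM2l prev_ge0 (gap_bound k _)).
have := ler_wpM2r (gap_ge0 k) prev_le; have := potential_le k; lra.
Qed.

End AcceleratedScheme.

Theorem theorem6 (R : realType) (n : nat) (Q : 'M[R]_n) (L : R)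
  (f : 'cV[R]_n -> R) (gf : 'cV[R]_n -> 'cV[R]_n)
  (w : 'cV[R]_n -> R) (gw : 'cV[R]_n -> 'cV[R]_n)
  (xs : 'cV[R]_n) (alpha alphat : nat -> R) (x y z : nat -> 'cV[R]_n) :
  sym_posdef Q ->
  0 < L ->
  is_gradient f gf -> convex_fn f ->
  (forall u v, dnorm Q (gf u - gf v) <= L * qnorm Q (u - v)) ->
  (forall u, f xs <= f u) ->
  is_gradient w gw -> strongly_convex1 Q w gw ->
  (forall k, (1 <= k)%N -> 0 < alpha k) ->
  alpha 1%N = 2 / L ->
  (forall k, (1 <= k)%N ->
     0 <= alpha k.+1 ^+ 2 * L - 2 * alpha k.+1 /\
     alpha k.+1 ^+ 2 * L - 2 * alpha k.+1 <= alpha k ^+ 2 * L) ->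
  y 0%N = x 0%N -> z 0%N = x 0%N ->
  (forall k, y k.+1 = x k - L^-1 *: (invmx Q *m gf (x k))) ->
  (forall k u, bregman w gw (z k) (z k.+1) + ip (alpha k.+1 *: gf (x k)) (z k.+1 - x k)
               <= bregman w gw (z k) u + ip (alpha k.+1 *: gf (x k)) (u - x k)) ->
  (forall k, x k.+1 = (1 - 2 / (alpha k.+2 * L)) *: y k.+1
                      + (2 / (alpha k.+2 * L)) *: z k.+1) ->
  (forall k, (1 <= k)%N -> 0 < alphat k) ->
  alphat 1%N = 1 / L ->
  (forall k, (1 <= k)%N ->
     0 <= alphat k.+1 ^+ 2 * L - alphat k.+1 /\
     alphat k.+1 ^+ 2 * L - alphat k.+1 <= 2^-1 * (alpha k ^+ 2 * L)) ->
  forall k : nat,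
    f ((1 - 1 / (alphat k.+1 * L)) *: y k + (1 / (alphat k.+1 * L)) *: z k) - f xs
      <= bregman w gw (x 0%N) xs / (L * alphat k.+1 ^+ 2).
Proof.
(* [y 0 = x 0] is unused: [α_1 = 2/L] makes [τ_1 = 1], so [x 0 = z 0]. *)
move=> Q_spd L_gt0 f_grad f_convex gf_lip xs_min w_grad w_sconvex alpha_gt0 alpha1
  alpha_step _ z0 y_step z_step x_step alphat_gt0 alphat1 alphat_step k.
have alphat_pos : 0 < alphat k.+1 := alphat_gt0 k.+1 isT.
rewrite ler_pdivlMr ?mulr_gt0 ?exprn_gt0 // mulrC (mulrC L).
exact: (extrapolation_gap_le Q_spd L_gt0 f_grad f_convex gf_lip xs_min w_grad w_sconvex
  alpha_gt0 alpha1 alpha_step z0 y_step z_step x_step alphat_gt0 alphat1 alphat_step).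
Qed.
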